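(* Let $\mathcal{H}$ be a real Hilbert space, let $A,B:\mathcal{H}\rightrightarrows\mathcal{H}$ be maximally monotone operators, let $\gamma>0$, and let $(\lambda_n)_{n=0}^\infty$ be a sequence in $[0,1]$ such that $\sum_{n\geq 0}\lambda_n(1-\lambda_n)=+\infty$. Let $\beta\in{]0,1[}$ and suppose that $q\in\operatorname{ran}\left(\operatorname{Id}+\frac{\gamma}{2(1-\beta)}(A+B)\right)$. Given any $x_0\in\mathcal{H}$, define for $n=0,1,2,\ldots$ \[ x_{n+1}=(1-\lambda_n)x_n+\lambda_n\left(2\beta J_{(\gamma B_{-q})}-\operatorname{Id}\right)\left(2\beta J_{(\gamma A_{-q})}-\operatorname{Id}\right)(x_n). \] Then there exists $x^\star\in\operatorname{Fix}\left((2\beta J_{(\gamma B_{-q})}-\operatorname{Id})(2\beta J_{(\gamma A_{-q})}-\operatorname{Id})\right)$ such that: (i) $(x_{n+1}-x_n)_{n=0}^\infty$ converges strongly to $0$; (ii) $(x_n)_{n=0}^\infty$ converges weakly to $x^\star$, and $J_{\gamma A}(q+x^\star)=J_{\frac{\gamma}{2(1-\beta)}(A+B)}(q)$; (iii) $\left(J_{\gamma A}(q+x_n)\right)_{n=0}^\infty$ converges strongly to $J_{\frac{\gamma}{2(1-\beta)}(A+B)}(q)$.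
   Context: For an operator $T:\mathcal{H}\rightrightarrows\mathcal{H}$, the resolvent is $J_T:=(\operatorname{Id}+T)^{-1}$, i.e. $J_T(x)=\{y: x\in y+T(y)\}$; for maximally monotone $T$ it is single-valued with full domain. For $w\in\mathcal{H}$, the inner $w$-perturbation of $T$ is $T_w(x):=T(x-w)$; thus $\gamma A_{-q}$ denotes the operator $x\mapsto\gamma A(x+q)$. $\operatorname{Fix}S=\{x: x=S(x)\}$ and $\operatorname{ran}$ denotes the range. *)

From HB Require Import structures.
From mathcomp Require Import all_boot all_order all_algebra.
From mathcomp Require Import all_classical all_reals all_analysis.
Set Implicit Arguments. Unset Strict Implicit. Unset Printing Implicit Defensive.
Import Order.TTheory GRing.Theory Num.Theory.
Import numFieldNormedType.Exports.
Local Open Scope classical_set_scope.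
Local Open Scope ring_scope.

Record inner_product (R : realType) (H : lmodType R) := InnerProduct {
  ip :> H -> H -> R;
  ip_sym : forall x y, ip x y = ip y x;
  ip_linear : forall (a : R) (x y z : H), ip (a *: x + y) z = a * ip x z + ip y z;
  ip_ge0 : forall x, 0 <= ip x x;
  ip_eq0 : forall x, ip x x = 0 -> x = 0 }.

Section Hilbert.
Context {R : realType} {H : lmodType R} (ip : inner_product H).

Definition hnorm (x : H) : R := Num.sqrt (ip x x).

Definition strong_cvg (u : nat -> H) (l : H) : Prop :=
  (fun n => hnorm (u n - l)) @ \oo --> (0 : R).

Definition weak_cvg (u : nat -> H) (l : H) : Prop :=
  forall y : H, (fun n => ip (u n) y) @ \oo --> ip l y.

Definition hilbert_complete : Prop :=
  forall u : nat -> H,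
    (forall e : R, 0 < e -> exists N : nat, forall m n : nat,
        (N <= m)%N -> (N <= n)%N -> hnorm (u m - u n) < e) ->
    exists l : H, strong_cvg u l.

Definition monotone (T : H -> set H) : Prop :=
  forall x y u v, T x u -> T y v -> 0 <= ip (x - y) (u - v).

Definition maximally_monotone (T : H -> set H) : Prop :=
  monotone T /\
  forall T' : H -> set H, monotone T' ->
    (forall x u, T x u -> T' x u) -> forall x u, T' x u -> T x u.

Definition op_scale (g : R) (T : H -> set H) : H -> set H :=
  fun x v => exists u, T x u /\ v = g *: u.

Definition op_add (T S : H -> set H) : H -> set H :=
  fun x v => exists a b, T x a /\ S x b /\ v = a + b.

(** inner w-perturbation  T_w (x) := T (x - w) *)
Definition op_perturb (w : H) (T : H -> set H) : H -> set H :=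
  fun x => T (x - w).

Definition in_ran_Id_plus (T : H -> set H) (q : H) : Prop :=
  exists x u, T x u /\ q = x + u.

(** resolvent J_T = (Id + T)^{-1}, as a function: J_T(x) is (a chosen) y
    with x ∈ y + T y; it is the unique such y whenever T is monotone and
    x ∈ ran (Id + T) (in particular everywhere if T is maximally monotone). *)
Definition resolvent (T : H -> set H) (x : H) : H :=
  xget 0 [set y | T y (x - y)].

End Hilbert.

(* The operator [Tq] = (2β J_{γB_{-q}} - Id) ∘ (2β J_{γA_{-q}} - Id) satisfies
   ‖Tz - Tz'‖² ≤ ‖z - z'‖² - 4β(1-β) ‖Jz - Jz'‖² with J = J_{γA_{-q}}, because
   resolvents are firmly nonexpansive.  It has a fixed point since
   q ∈ ran(Id + γ/(2(1-β))(A+B)), and at any fixed point x, J_{γA}(q + x) is the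
   resolvent of the sum at q.  The Krasnosel'skiĭ–Mann iterates are Fejér monotone
   with residuals ‖T x_n - x_n‖ → 0 (as Σ λ_n(1-λ_n) = ∞); they converge weakly by
   an asymptotic-center (Opial) argument, and the inequality above turns
   ‖x_n - x⋆‖² - ‖T x_n - x⋆‖² → 0 into strong convergence of J_{γA}(q + x_n).
   Resolvents are total by Minty's theorem, proved by minimizing a Fitzpatrick-type
   function; this minimization and the existence of asymptotic centers both rest on
   one lemma: a uniformly convex functional on a complete space attains its
   infimum. *)

From Pilot Require Import Defs.
From HB Require Import structures.
From mathcomp Require Import all_boot all_order all_algebra.
From mathcomp Require Import all_classical all_reals all_analysis.
From mathcomp Require Import ring lra.
Import Order.TTheory GRing.Theory Num.Theory.
Import numFieldNormedType.Exports.
Local Open Scope classical_set_scope.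
Local Open Scope ring_scope.

Section InnerProduct.
Context {R : realType} {H : lmodType R} (ip : inner_product H).

Definition sqnorm (x : H) : R := ip x x.

Lemma ip0l z : ip 0 z = 0.
Proof.
have := ip_linear ip 1 0 0 z; rewrite scale1r addr0 mul1r => h.
by apply: (addrI (ip 0 z)); rewrite addr0 -h.
Qed.

Lemma ipDl x y z : ip (x + y) z = ip x z + ip y z.
Proof. by have := ip_linear ip 1 x y z; rewrite scale1r mul1r. Qed.

Lemma ipZl a x z : ip (a *: x) z = a * ip x z.
Proof. by have := ip_linear ip a x 0 z; rewrite addr0 ip0l addr0. Qed.

Lemma ipNl x z : ip (- x) z = - ip x z.
Proof. by rewrite -scaleN1r ipZl mulN1r. Qed.

Lemma ipBl x y z : ip (x - y) z = ip x z - ip y z.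
Proof. by rewrite ipDl ipNl. Qed.

Lemma ip0r z : ip z 0 = 0.
Proof. by rewrite ip_sym ip0l. Qed.

Lemma ipDr x y z : ip z (x + y) = ip z x + ip z y.
Proof. by rewrite ip_sym ipDl !(ip_sym ip z). Qed.

Lemma ipZr a x z : ip z (a *: x) = a * ip z x.
Proof. by rewrite ip_sym ipZl (ip_sym ip z). Qed.

Lemma ipNr x z : ip z (- x) = - ip z x.
Proof. by rewrite ip_sym ipNl (ip_sym ip z). Qed.

Lemma ipBr x y z : ip z (x - y) = ip z x - ip z y.
Proof. by rewrite ipDr ipNr. Qed.

Definition ipE := (ipDl, ipDr, ipZl, ipZr, ipNl, ipNr, ip0l, ip0r).

Lemma sqnorm_ge0 x : 0 <= sqnorm x. Proof. exact: ip_ge0. Qed.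

Lemma sqnorm0 : sqnorm 0 = 0. Proof. by rewrite /sqnorm ip0l. Qed.

Lemma sqnormB_eq0 x y : sqnorm (x - y) = 0 -> x = y.
Proof. by move/ip_eq0/eqP; rewrite subr_eq0 => /eqP. Qed.

Lemma sqnormB_le0 x y : sqnorm (x - y) <= 0 -> x = y.
Proof. by move=> h; apply: sqnormB_eq0; apply/eqP; rewrite eq_le h sqnorm_ge0. Qed.

Lemma sqnormD x y : sqnorm (x + y) = sqnorm x + 2 * ip x y + sqnorm y.
Proof. rewrite /sqnorm !ipE (ip_sym ip y x); ring. Qed.

Lemma sqnormB x y : sqnorm (x - y) = sqnorm x - 2 * ip x y + sqnorm y.
Proof. rewrite /sqnorm !ipE (ip_sym ip y x); ring. Qed.

Lemma sqnormN x : sqnorm (- x) = sqnorm x.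
Proof. rewrite /sqnorm !ipE; ring. Qed.

Lemma sqnormZ a x : sqnorm (a *: x) = a ^+ 2 * sqnorm x.
Proof. rewrite /sqnorm !ipE; ring. Qed.

Lemma sqnormBC x y : sqnorm (x - y) = sqnorm (y - x).
Proof. by rewrite -sqnormN opprB. Qed.

Lemma ip_le_amgm t x y : 0 < t -> 2 * ip x y <= t * sqnorm x + t^-1 * sqnorm y.
Proof.
move=> t0; have := sqnorm_ge0 (t *: x - y); rewrite sqnormB sqnormZ ipZl.
have -> : t ^+ 2 * sqnorm x - 2 * (t * ip x y) + sqnorm y =
    t * (t * sqnorm x + t^-1 * sqnorm y - 2 * ip x y) by field; rewrite gt_eqF.
by rewrite pmulr_rge0 // subr_ge0.
Qed.

Lemma normr_ip_le_amgm t x y : 0 < t -> 2 * `|ip x y| <= t * sqnorm x + t^-1 * sqnorm y.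
Proof.
move=> t0; case: (lerP 0 (ip x y)) => h; first by rewrite ger0_norm //; apply: ip_le_amgm.
by rewrite ltr0_norm // -ipNr -(sqnormN y); apply: ip_le_amgm.
Qed.

Lemma sqnormD_le_weighted t u v : 0 < t ->
  sqnorm (u + v) <= (1 + t) * sqnorm u + (1 + t^-1) * sqnorm v.
Proof. by move=> t0; rewrite sqnormD; have := ip_le_amgm t u v t0; lra. Qed.

Lemma sqnorm_midpoint z a b : sqnorm (z - 2^-1 *: (a + b)) =
  2^-1 * sqnorm (z - a) + 2^-1 * sqnorm (z - b) - 4^-1 * sqnorm (a - b).
Proof.
rewrite /sqnorm !ipE !(ip_sym ip b a) !(ip_sym ip a z) !(ip_sym ip b z).
have -> : (4 : R) = 2 * 2 by rewrite -natrM.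
by rewrite invfM; field.
Qed.

Lemma sqnorm_convex_comb l a b : sqnorm ((1 - l) *: a + l *: b) =
  (1 - l) * sqnorm a + l * sqnorm b - l * (1 - l) * sqnorm (a - b).
Proof. rewrite /sqnorm !ipE !(ip_sym ip b a); ring. Qed.

Lemma sqnorm_le_shift s l : sqnorm l <= sqnorm s + 2 * ip l (l - s).
Proof.
by have := sqnorm_ge0 (l - s); rewrite sqnormB ipBr /sqnorm; lra.
Qed.

Lemma ip_le_sqrt u v : ip u v <= Num.sqrt (sqnorm u) * Num.sqrt (sqnorm v).
Proof.
have [->|u0] := eqVneq u 0; first by rewrite ip0l sqnorm0 sqrtr0 mul0r.
have [->|v0] := eqVneq v 0; first by rewrite ip0r sqnorm0 sqrtr0 mulr0.
have sqnorm_gt0 w : w != 0 -> 0 < Num.sqrt (sqnorm w).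
  move=> w0; rewrite sqrtr_gt0 lt_neqAle sqnorm_ge0 andbT eq_sym.
  by apply: contra w0 => /eqP/ip_eq0 ->.
have [a0 b0] := (sqnorm_gt0 _ u0, sqnorm_gt0 _ v0).
have := ip_le_amgm _ u v (divr_gt0 b0 a0).
rewrite -{2}(sqr_sqrtr (sqnorm_ge0 u)) -{3}(sqr_sqrtr (sqnorm_ge0 v)) invf_div.
move: a0 b0; set a := Num.sqrt _; set b := Num.sqrt _ => a0 b0.
have -> : b / a * a ^+ 2 + a / b * b ^+ 2 = 2 * (a * b).
  by field; rewrite !gt_eqF.
lra.
Qed.

Lemma sqnormD_le_sqr u v a b : 0 <= a -> 0 <= b ->
  sqnorm u <= a ^+ 2 -> sqnorm v <= b ^+ 2 -> sqnorm (u + v) <= (a + b) ^+ 2.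
Proof.
move=> a0 b0 hu hv; rewrite sqnormD; have := ip_le_sqrt u v.
have hu' : Num.sqrt (sqnorm u) <= a by rewrite -(ger0_norm a0) -sqrtr_sqr ler_wsqrtr.
have hv' : Num.sqrt (sqnorm v) <= b by rewrite -(ger0_norm b0) -sqrtr_sqr ler_wsqrtr.
have := sqrtr_ge0 (sqnorm u); have := sqrtr_ge0 (sqnorm v); nra.
Qed.

Lemma ip_continuous0 w e : 0 < e ->
  exists2 d, 0 < d & forall a, sqnorm a < d -> `|ip w a| < e.
Proof.
move=> e0; have w0 := sqnorm_ge0 w.
set t := (sqnorm w + 1) / e.
have t0 : 0 < t by rewrite divr_gt0 // ltr_wpDl.
exists (e / t) => [|a ha]; first by rewrite divr_gt0.
have h1 : t^-1 * sqnorm w < e.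
  rewrite /t invf_div mulrC mulrA ltr_pdivrMr; last by rewrite ltr_wpDl.
  by rewrite mulrC ltr_pM2l // ltrDl.
have h2 : t * sqnorm a < e by rewrite mulrC -ltr_pdivlMr.
by have := normr_ip_le_amgm t a w t0; rewrite ip_sym; lra.
Qed.

Lemma sqnormD_le_small r e : 0 <= r -> 0 < e ->
  exists2 d, 0 < d & forall a b, sqnorm a <= r -> sqnorm b < d -> sqnorm (a + b) <= r + e.
Proof.
move=> r0 e0; set t := e / (2 * (r + 1)).
have t0 : 0 < t by rewrite divr_gt0 // mulr_gt0 //; lra.
have tr : t * r <= e / 2.
  have : t * (2 * (r + 1)) = e by rewrite /t mulfVK // gt_eqF // mulr_gt0 //; lra.
  by move: t0; clearbody t; nra.
have t1 : 0 < 1 + t^-1 by rewrite ltr_wpDr ?invr_ge0 ?ltW.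
exists (e / (2 * (1 + t^-1))) => [|a b ar bd]; first by rewrite divr_gt0 // mulr_gt0.
apply: le_trans (sqnormD_le_weighted _ a b t0) _.
have : (1 + t^-1) * sqnorm b <= e / 2.
  have -> : e / 2 = (1 + t^-1) * (e / (2 * (1 + t^-1))).
    by field; rewrite !gt_eqF //; lra.
  by rewrite ler_pM2l // ltW.
have := ler_wpM2l (ltW t0) ar; lra.
Qed.

End InnerProduct.

Section Vanishing.
Context {R : realType}.

Definition vanishes (u : nat -> R) : Prop :=
  forall e, 0 < e -> exists N, forall n, (N <= n)%N -> u n < e.

Lemma vanishes_le {u v : nat -> R} :
  (forall n, v n <= u n) -> vanishes u -> vanishes v.
Proof.
by move=> vu hu e e0; have [N hN] := hu e e0; exists N => n /hN; apply: le_lt_trans.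
Qed.

Lemma vanishes_pscale {k : R} {u} : 0 < k -> vanishes (fun n => k * u n) -> vanishes u.
Proof.
move=> k0 hu e e0; have [N hN] := hu (k * e) (mulr_gt0 k0 e0).
by exists N => n /hN; rewrite ltr_pM2l.
Qed.

Lemma vanishes_inv_succ : vanishes (fun i => i.+1%:R^-1).
Proof.
move=> e e0; exists (Num.trunc e^-1) => i hi.
rewrite -(invrK e) ltf_pV2 ?posrE ?invr_gt0 //.
by apply: lt_le_trans (truncnS_gt e^-1) _; rewrite ler_nat ltnS.
Qed.

End Vanishing.

Section StrongConvergence.
Context {R : realType} {H : lmodType R} (ip : inner_product H).
Local Notation sqnorm := (sqnorm ip).

Lemma hnorm_lt x e : 0 < e -> (hnorm ip x < e) = (sqnorm x < e ^+ 2).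
Proof.
move=> e0; rewrite /hnorm -{1}(ger0_norm (ltW e0)) -sqrtr_sqr ltr_sqrt //.
exact: exprn_gt0.
Qed.

Lemma strong_cvg_sqnormP u l :
  strong_cvg ip u l <-> vanishes (fun n => sqnorm (u n - l)).
Proof.
split.
- move=> /cvgrPdist_lt h e e0.
  have se : 0 < Num.sqrt e by rewrite sqrtr_gt0.
  have [N _ hN] := h _ se.
  exists N => n /hN; rewrite sub0r normrN ger0_norm ?sqrtr_ge0 //.
  by rewrite hnorm_lt ?sqrtr_gt0 // sqr_sqrtr // ltW.
- move=> h; apply/cvgrPdist_lt => e e0.
  have [N hN] := h (e ^+ 2) (exprn_gt0 2 e0).
  exists N => // n /= /hN; rewrite sub0r normrN ger0_norm ?sqrtr_ge0 //.
  by rewrite hnorm_lt.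
Qed.

Lemma complete_sqnorm : hilbert_complete ip -> forall u : nat -> H,
  (forall e, 0 < e -> exists N, forall i j, (N <= i)%N -> (N <= j)%N ->
     sqnorm (u i - u j) < e) ->
  exists l, vanishes (fun i => sqnorm (u i - l)).
Proof.
move=> hc u hu; have [e e0|l /strong_cvg_sqnormP hl] := hc u; last by exists l.
have [N hN] := hu (e ^+ 2) (exprn_gt0 2 e0).
by exists N => m n hm hn; rewrite hnorm_lt // hN.
Qed.

Lemma weak_cvgP u l :
  (forall y e, 0 < e -> exists N, forall n, (N <= n)%N -> `|ip (u n - l) y| < e) ->
  weak_cvg ip u l.
Proof.
move=> h y; apply/cvgrPdist_lt => e e0; have [N hN] := h y e e0.
by exists N => // n /= /hN; rewrite distrC ipBl.
Qed.

End StrongConvergence.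

(** * Minimizing uniformly convex functionals *)

(* [P x r] encodes "the functional is at most [r] at [x]". *)
Lemma uniformly_convex_epigraph_min {R : realType} (X : Type)
    (D : X -> X -> R) (mid : X -> X -> X) (P : X -> R -> Prop) (k : R) :
  0 < k ->
  (forall s : nat -> X,
     (forall e, 0 < e -> exists N, forall i j, (N <= i)%N -> (N <= j)%N -> D (s i) (s j) < e) ->
     exists l, vanishes (fun i => D (s i) l)) ->
  (exists x r, P x r) ->
  (forall x r, P x r -> 0 <= r) ->
  (forall x r r', P x r -> r <= r' -> P x r') ->
  (forall x x' r r', P x r -> P x' r' -> P (mid x x') ((r + r') / 2 - k * D x x')) ->
  (forall s l m, vanishes (fun i => D (s i) l) ->
     (forall i, P (s i) (m + i.+1%:R^-1)) -> 0 <= m -> forall e, 0 < e -> P l (m + e)) ->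
  exists l m, 0 <= m /\ (forall e, 0 < e -> P l (m + e)) /\ (forall x r, P x r -> m <= r).
Proof.
move=> k0 complete [x0 [r0 P0]] P_ge0 P_up P_mid P_closed.
set E := [set r | exists x, P x r].
have E_inf : has_inf E by split; [exists r0, x0 | exists 0 => r [x]; apply: P_ge0].
set m := inf E.
have m0 : 0 <= m by apply: lb_le_inf; [exists r0, x0 | move=> r [x]; apply: P_ge0].
have m_le x r : P x r -> m <= r by move=> Pxr; apply: ge_inf (proj2 E_inf) _ _; exists x.
have near_m i : exists x, P x (m + i.+1%:R^-1).
  have i0 : 0 < i.+1%:R^-1 :> R by rewrite invr_gt0 ltr0Sn.
  have [r [x Pxr] hr] := inf_adherent i0 E_inf.
  by exists x; apply: P_up Pxr _; apply: ltW.
have [s Ps] := choice near_m.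
have cauchy e : 0 < e ->
    exists N, forall i j, (N <= i)%N -> (N <= j)%N -> D (s i) (s j) < e.
  move=> e0; have [N hN] := vanishes_inv_succ (k * e) (mulr_gt0 k0 e0).
  exists N => i j /hN hi /hN hj; have := m_le _ _ (P_mid _ _ _ _ (Ps i) (Ps j)).
  rewrite -(ltr_pM2l k0); move: hi hj; set a := i.+1%:R^-1; set b := j.+1%:R^-1.
  by clearbody a b m; lra.
have [l hl] := complete s cauchy.
by exists l, m; split => //; split => //; apply: P_closed hl Ps m0.
Qed.

(** * Minty's theorem *)

Lemma le_addr_small_mul {R : realFieldType} (a b c : R) : 0 <= c ->
  (forall t, 0 < t -> t <= 1 -> a <= b + t * c) -> a <= b.
Proof.
move=> c0 h; apply/ler_addgt0Pr => e e0.
set t := Num.min 1 (e / (c + 1)).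
have c1 : 0 < c + 1 by lra.
have t0 : 0 < t by rewrite lt_min ltr01 divr_gt0.
have tc : t * c <= e.
  have tle : t <= e / (c + 1) by rewrite ge_min lexx orbT.
  apply: le_trans (ler_wpM2r c0 tle) _.
  by rewrite mulrAC ler_pdivrMr // ler_wpM2l ?(ltW e0) // lerDl.
by apply: le_trans (h t t0 _) _; rewrite ?lerD2l // ge_min lexx.
Qed.

Section Minty.
Context {R : realType} {H : lmodType R} (ip : inner_product H).
Local Notation sqnorm := (sqnorm ip).

Lemma maximally_monotone_in {A : H -> set H} x u : maximally_monotone ip A ->
  (forall y v, A y v -> 0 <= ip (x - y) (u - v)) -> A x u.
Proof.
move=> [monoA maxA] h.
pose A' a b := A a b \/ (a = x /\ b = u).
apply: (maxA A') => [a b c d|a b hab|]; [|by left|by right].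
move=> [h1|[-> ->]] [h2|[-> ->]].
- exact: monoA.
- by rewrite -(opprB x) -(opprB u) ipNl ipNr opprK; apply: h.
- exact: h.
- by rewrite !subrr ip0l.
Qed.

Lemma maximally_monotone_graph_nonempty {A : H -> set H} :
  maximally_monotone ip A -> exists y v, A y v.
Proof.
move=> hA; case: (pselect (exists y v, A y v)) => // hn.
by exists 0, 0; apply: maximally_monotone_in hA _ => y v hyv; case: hn; exists y, v.
Qed.

Lemma complete_pair : hilbert_complete ip -> forall s : nat -> H * H,
  (forall e, 0 < e -> exists N, forall i j, (N <= i)%N -> (N <= j)%N ->
     sqnorm ((s i).1 - (s j).1) + sqnorm ((s i).2 - (s j).2) < e) ->
  exists l, vanishes (fun i => sqnorm ((s i).1 - l.1) + sqnorm ((s i).2 - l.2)).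
Proof.
move=> hc s hs.
have component (f : H * H -> H) : (forall p p', sqnorm (f p - f p') <=
    sqnorm (p.1 - p'.1) + sqnorm (p.2 - p'.2)) ->
    exists l, vanishes (fun i => sqnorm (f (s i) - l)).
  move=> hf; apply: complete_sqnorm hc _ _ => e /hs[N hN].
  by exists N => i j hi hj; apply: le_lt_trans (hf _ _) (hN i j hi hj).
have [p p'|l1 hl1] := component fst; first by rewrite lerDl sqnorm_ge0.
have [p p'|l2 hl2] := component snd; first by rewrite lerDr sqnorm_ge0.
exists (l1, l2) => e e0; have e2 : 0 < e / 2 by rewrite divr_gt0.
have [[N1 h1] [N2 h2]] := (hl1 _ e2, hl2 _ e2).
exists (maxn N1 N2) => i; rewrite geq_max => /andP[/h1 ? /h2 ?] /=; lra.
Qed.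

Variables (A : H -> set H).
Hypotheses (hc : hilbert_complete ip) (hA : maximally_monotone ip A).

(* [fitz_term y v p] is the [(y, v)]-term of the Fitzpatrick function of [A]
   at [p], plus [‖p‖²/2]; its supremum over the graph of [A] is at least
   [‖p.1 + p.2‖²/2], and a minimizer yields a zero of [Id + A]. *)
Definition fitz_term (y v : H) (p : H * H) : R :=
  ip p.1 v + ip y p.2 - ip y v + 2^-1 * (sqnorm p.1 + sqnorm p.2).

Definition fitz_ub (p : H * H) (r : R) : Prop :=
  forall y v, A y v -> fitz_term y v p <= r.

Let pdist (p p' : H * H) : R := sqnorm (p.1 - p'.1) + sqnorm (p.2 - p'.2).

Lemma fitz_ub_ge {x u : H} {r} : fitz_ub (x, u) r -> 2^-1 * sqnorm (x + u) <= r.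
Proof.
move=> hr; have [//|] := lerP (2^-1 * sqnorm (x + u)) r; rewrite sqnormD => lt_r.
have xu : A x u.
  apply: maximally_monotone_in hA _ => y v /hr.
  by rewrite /fitz_term /= ipBl !ipBr; lra.
by have := hr _ _ xu; rewrite /fitz_term /=; lra.
Qed.

Lemma fitz_ub_midpoint p p' r r' : fitz_ub p r -> fitz_ub p' r' ->
  fitz_ub (2^-1 *: (p.1 + p'.1), 2^-1 *: (p.2 + p'.2)) ((r + r') / 2 - 8^-1 * pdist p p').
Proof.
move=> hr hr' y v hyv; move: (hr _ _ hyv) (hr' _ _ hyv).
have mid z z' : sqnorm (2^-1 *: (z + z')) =
    2^-1 * sqnorm z + 2^-1 * sqnorm z' - 4^-1 * sqnorm (z - z').
  by have := sqnorm_midpoint ip 0 z z'; rewrite !sub0r !sqnormN.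
rewrite /fitz_term /pdist /= !mid !ipE.
have -> : (8 : R)^-1 = 2^-1 * 4^-1 by rewrite -invfM -natrM.
lra.
Qed.

Lemma fitz_term_shift y v s l :
  fitz_term y v l <= fitz_term y v s + ip (v + l.1) (l.1 - s.1) + ip (y + l.2) (l.2 - s.2).
Proof.
have := sqnorm_le_shift ip s.1 l.1; have := sqnorm_le_shift ip s.2 l.2.
by rewrite /fitz_term /sqnorm !ipE (ip_sym ip l.1 v) (ip_sym ip s.1 v); lra.
Qed.

Lemma fitz_ub_closed s l m : vanishes (fun i => pdist (s i) l) ->
  (forall i, fitz_ub (s i) (m + i.+1%:R^-1)) -> forall e, 0 < e -> fitz_ub l (m + e).
Proof.
move=> sl hs e e0 y v hyv; have e3 : 0 < e / 3 by rewrite divr_gt0.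
have [d1 d1_gt0 hd1] := ip_continuous0 ip (v + l.1) _ e3.
have [d2 d2_gt0 hd2] := ip_continuous0 ip (y + l.2) _ e3.
have [[N1 hN1] [N2 hN2]] := (sl _ d1_gt0, sl _ d2_gt0).
have [N3 hN3] := vanishes_inv_succ _ e3.
set i := maxn (maxn N1 N2) N3.
have [/hN1 h1 /hN2 h2 /hN3 h3] : [/\ (N1 <= i)%N, (N2 <= i)%N & (N3 <= i)%N].
  by rewrite !leq_max !leqnn !orbT.
have := sqnorm_ge0 ip ((s i).1 - l.1); have := sqnorm_ge0 ip ((s i).2 - l.2).
rewrite /pdist in h1 h2 => ge1 ge2.
have /ltr_normlW b1 : `|ip (v + l.1) (l.1 - (s i).1)| < e / 3.
  by apply: hd1; rewrite sqnormBC; lra.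
have /ltr_normlW b2 : `|ip (y + l.2) (l.2 - (s i).2)| < e / 3.
  by apply: hd2; rewrite sqnormBC; lra.
apply: le_trans (fitz_term_shift y v (s i) l) _.
have -> : m + e = m + e / 3 + e / 3 + e / 3 by field.
apply: lerD; [apply: lerD|]; [|exact: ltW b1|exact: ltW b2].
by apply: le_trans (hs i y v hyv) _; rewrite lerD2l ltW.
Qed.

Lemma fitz_ub_min : exists p m, fitz_ub p m /\ forall p' r, fitz_ub p' r -> m <= r.
Proof.
have k0 : 0 < 8^-1 :> R by rewrite invr_gt0.
have nonempty : exists p r, fitz_ub p r.
  have [y0 [v0 h0]] := maximally_monotone_graph_nonempty hA.
  exists (y0, v0), (ip y0 v0 + 2^-1 * (sqnorm y0 + sqnorm v0)) => y v hyv.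
  by have := proj1 hA _ _ _ _ h0 hyv; rewrite /fitz_term /= ipBl !ipBr; lra.
have ge0 p r : fitz_ub p r -> 0 <= r.
  by case: p => x u /fitz_ub_ge; apply: le_trans; rewrite mulr_ge0 ?sqnorm_ge0.
have up p r r' : fitz_ub p r -> r <= r' -> fitz_ub p r'.
  by move=> hr rr' y v /hr /le_trans; apply.
have closed s l m : vanishes (fun i => pdist (s i) l) ->
    (forall i, fitz_ub (s i) (m + i.+1%:R^-1)) -> 0 <= m ->
    forall e, 0 < e -> fitz_ub l (m + e).
  by move=> sl hs _; apply: fitz_ub_closed sl hs.
have [p [m [_ [pm m_le]]]] := @uniformly_convex_epigraph_min R _ pdist _ fitz_ub _ k0
  (complete_pair hc) nonempty ge0 up fitz_ub_midpoint closed.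
by exists p, m; split => // y v hyv; apply/ler_addgt0Pr => e /pm; apply.
Qed.

Lemma fitz_min_graph_bound {x u : H} {m : R} : fitz_ub (x, u) m ->
  (forall p r, fitz_ub p r -> m <= r) -> forall y v, A y v ->
  sqnorm (x - y) + sqnorm (u - v) <= sqnorm (y + v) - sqnorm (x + u).
Proof.
move=> xum m_le y v hyv; have := fitz_ub_ge xum; rewrite (sqnormD ip x) (sqnormD ip y).
suff : m <= ip y v + 2^-1 * (sqnorm y + sqnorm v) - 2^-1 * (sqnorm (x - y) + sqnorm (u - v)).
  by lra.
apply: (@le_addr_small_mul R _ _ (2^-1 * (sqnorm (x - y) + sqnorm (u - v)))) => [|t t0 t1].
  by apply: mulr_ge0; [rewrite invr_ge0 | apply: addr_ge0; apply: sqnorm_ge0].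
pose z := ((1 - t) *: x + t *: y, (1 - t) *: u + t *: v).
have zub : fitz_ub z ((1 - t) * (m - 2^-1 * (sqnorm x + sqnorm u)) + t * ip y v +
    2^-1 * (sqnorm z.1 + sqnorm z.2)).
  move=> y' v' h'; have := xum _ _ h'; have := proj1 hA _ _ _ _ hyv h'.
  rewrite /fitz_term /= ipBl !ipBr !ipE => hm hp.
  have t1' : 0 <= 1 - t by lra.
  by nra.
have := m_le _ _ zub; rewrite /z /= !sqnorm_convex_comb => hz.
by rewrite -(ler_pM2l t0); nra.
Qed.

Lemma minty_zero : exists x, A x (- x).
Proof.
have [[x u] [m [xum m_le]]] := fitz_ub_min.
have bound := fitz_min_graph_bound xum m_le.
have ux : A (- u) (- x).
  apply: maximally_monotone_in hA _ => y v /bound.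
  have := sqnorm_ge0 ip (x + u).
  rewrite !sqnormB !sqnormD !ipBl !ipBr !ipNl !ipNr (ip_sym ip y x) (ip_sym ip u x).
  by lra.
have := bound _ _ ux; rewrite !opprK -opprD sqnormN (addrC u x).
have := sqnorm_ge0 ip (x + u) => ge0 le0.
have xu : x = - u by apply: sqnormB_le0; rewrite opprK; lra.
by exists x; rewrite -xu in ux.
Qed.

End Minty.

(** * Resolvents *)

Section Resolvent.
Context {R : realType} {H : lmodType R} (ip : inner_product H).
Local Notation sqnorm := (sqnorm ip).

Definition nonexpansive (T : H -> H) : Prop :=
  forall z z', sqnorm (T z - T z') <= sqnorm (z - z').

Definition firmly_nonexpansive (J : H -> H) : Prop :=
  forall z z', sqnorm (J z - J z') <= ip (J z - J z') (z - z').

Lemma maximally_monotone_shift_scale {A : H -> set H} (s : H) {g : R} : 0 < g ->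
  maximally_monotone ip A -> maximally_monotone ip (fun x u => A (x + s) (g^-1 *: u)).
Proof.
move=> g0 [monoA maxA]; have g0' : g != 0 by rewrite gt_eqF.
split=> [x y u v /monoA h /h|T' monoT' AT' x u T'xu].
  by rewrite opprD addrACA subrr addr0 -scalerBr ipZr pmulr_rge0 // invr_gt0.
have := maxA (fun y a => T' (y - s) (g *: a)) _ _ (x + s) (g^-1 *: u).
rewrite addrK scalerA divff // scale1r; apply => // [y1 y2 a1 a2 /monoT' h /h|y a Aya].
  by rewrite opprD addrACA opprK addNr addr0 -scalerBr ipZr pmulr_rge0.
by apply: AT'; rewrite subrK scalerA mulVf // scale1r.
Qed.

Lemma ran_Id_plus_perturb (A : H -> set H) g w z : hilbert_complete ip ->
  maximally_monotone ip A -> 0 < g -> exists y, op_scale g (op_perturb w A) y (z - y).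
Proof.
move=> hc hA g0; have g0' : g != 0 by rewrite gt_eqF.
have [x hx] := minty_zero ip _ hc (maximally_monotone_shift_scale (z - w) g0 hA).
exists (x + z), (g^-1 *: - x); split; first by rewrite /op_perturb -addrA.
by rewrite scalerA divff // scale1r opprD addrCA subrr addr0.
Qed.

Lemma resolventP {T : H -> set H} {z : H} :
  (exists y, T y (z - y)) -> T (resolvent T z) (z - resolvent T z).
Proof. exact: xgetPex. Qed.

Lemma resolvent_eq (T : H -> set H) z y :
  Defs.monotone ip T -> T y (z - y) -> resolvent T z = y.
Proof.
move=> monoT Ty; apply: xget_unique => // y' /monoT /(_ Ty).
have -> : ip (y' - y) (z - y' - (z - y)) = - sqnorm (y' - y) by rewrite /sqnorm !ipE; ring.
by rewrite oppr_ge0; apply: sqnormB_le0.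
Qed.

Lemma monotone_scale (T : H -> set H) g :
  0 < g -> Defs.monotone ip T -> Defs.monotone ip (op_scale g T).
Proof.
move=> g0 monoT x y u v [a [Ta ->]] [b [Tb ->]].
by rewrite -scalerBr ipZr pmulr_rge0 //; apply: monoT.
Qed.

Lemma monotone_perturb (T : H -> set H) w : Defs.monotone ip T -> Defs.monotone ip (op_perturb w T).
Proof.
by move=> monoT x y u v /monoT h /h; rewrite opprB addrA subrK.
Qed.

Lemma monotone_add (T S : H -> set H) :
  Defs.monotone ip T -> Defs.monotone ip S -> Defs.monotone ip (op_add T S).
Proof.
move=> monoT monoS x y u v [a [b [Ta [Sb ->]]]] [a' [b' [Ta' [Sb' ->]]]].
rewrite opprD addrACA ipDr.
by apply: addr_ge0; [apply: monoT | apply: monoS].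
Qed.

Lemma resolvent_firmly_nonexpansive (T : H -> set H) :
  Defs.monotone ip T -> (forall z, exists y, T y (z - y)) -> firmly_nonexpansive (resolvent T).
Proof.
move=> monoT ran z z'; have := monoT _ _ _ _ (resolventP (ran z)) (resolventP (ran z')).
set a := resolvent T z; set a' := resolvent T z'.
have -> : ip (a - a') (z - a - (z' - a')) = ip (a - a') (z - z') - sqnorm (a - a').
  by rewrite /sqnorm !ipE; ring.
by rewrite subr_ge0.
Qed.

Lemma reflection_contract {J : H -> H} {beta : R} : firmly_nonexpansive J -> 0 <= beta ->
  forall z z', sqnorm (((2 * beta) *: J z - z) - ((2 * beta) *: J z' - z')) <=
    sqnorm (z - z') - 4 * beta * (1 - beta) * sqnorm (J z - J z').
Proof.
move=> firmJ b0 z z'; have := firmJ z z'; set a := J z; set a' := J z'.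
have -> : sqnorm ((2 * beta) *: a - z - ((2 * beta) *: a' - z')) =
    4 * beta ^+ 2 * sqnorm (a - a') - 4 * beta * ip (a - a') (z - z') + sqnorm (z - z').
  rewrite /sqnorm !ipE !(ip_sym ip z a) !(ip_sym ip z' a) !(ip_sym ip z a').
  by rewrite !(ip_sym ip z' a') !(ip_sym ip a' a) !(ip_sym ip z' z); ring.
by rewrite expr2; nra.
Qed.

End Resolvent.

(** * The reflected-resolvent operator *)

Section DouglasRachford.
Context {R : realType} {H : lmodType R} (ip : inner_product H).
Local Notation sqnorm := (sqnorm ip).
Variables (g beta : R) (q : H) (A B : H -> set H).
Hypotheses (hc : hilbert_complete ip) (hg : 0 < g) (hbeta : 0 < beta < 1).
Hypotheses (hA : maximally_monotone ip A) (hB : maximally_monotone ip B).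

Definition Jq (C : H -> set H) : H -> H := resolvent (op_scale g (op_perturb (- q) C)).

Definition Rq (C : H -> set H) (z : H) : H := (2 * beta) *: Jq C z - z.

Definition Tq (z : H) : H := (2 * beta) *: Jq B (Rq A z) - Rq A z.

Let g_neq0 : g != 0. Proof. by rewrite gt_eqF. Qed.
Let beta_gt0 : 0 < beta. Proof. by case/andP: hbeta. Qed.
Let beta_lt1 : beta < 1. Proof. by case/andP: hbeta. Qed.
Let one_minus_beta_neq0 : 1 - beta != 0. Proof. by rewrite subr_eq0 gt_eqF. Qed.
Let contraction_gt0 : 0 < 4 * beta * (1 - beta).
Proof. by rewrite !mulr_gt0 ?subr_gt0. Qed.

Lemma Jq_spec {C} : maximally_monotone ip C ->
  forall z, op_scale g (op_perturb (- q) C) (Jq C z) (z - Jq C z).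
Proof. by move=> hC z; apply: resolventP; apply: (ran_Id_plus_perturb ip). Qed.

Lemma Jq_monotone {C} :
  maximally_monotone ip C -> Defs.monotone ip (op_scale g (op_perturb (- q) C)).
Proof. by case=> monoC _; apply: monotone_scale => //; apply: monotone_perturb. Qed.

Lemma Jq_firmly_nonexpansive {C} : maximally_monotone ip C -> firmly_nonexpansive ip (Jq C).
Proof.
move=> hC; apply: resolvent_firmly_nonexpansive; first exact: Jq_monotone.
by move=> z; exists (Jq C z); apply: Jq_spec.
Qed.

Lemma Tq_contract z z' : sqnorm (Tq z - Tq z') <=
  sqnorm (z - z') - 4 * beta * (1 - beta) * sqnorm (Jq A z - Jq A z').
Proof.
have := reflection_contract ip (Jq_firmly_nonexpansive hB) (ltW beta_gt0) (Rq A z) (Rq A z').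
have := reflection_contract ip (Jq_firmly_nonexpansive hA) (ltW beta_gt0) z z'.
have := mulr_ge0 (ltW contraction_gt0) (sqnorm_ge0 ip (Jq B (Rq A z) - Jq B (Rq A z'))).
by rewrite /Tq /Rq; lra.
Qed.

Lemma Tq_nonexpansive : nonexpansive ip Tq.
Proof.
move=> z z'; apply: le_trans (Tq_contract z z') _.
by rewrite gerBl mulr_ge0 ?sqnorm_ge0 ?ltW.
Qed.

(* Vector identities below are proved by expanding [sqnorm (lhs - rhs)] into
   inner products and showing it is [0] with [ring] or [field]. *)
Lemma resolvent_scale_shift x : resolvent (op_scale g A) (q + x) = Jq A x + q.
Proof.
apply: resolvent_eq; first exact: monotone_scale hg (proj1 hA).
have [u [Au xu]] := Jq_spec hA x; exists u; split; first by rewrite /op_perturb opprK in Au.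
by rewrite -xu; apply: (sqnormB_eq0 ip); rewrite /sqnorm !ipE; ring.
Qed.

Lemma Tq_fixed_resolvent x : Tq x = x -> resolvent (op_scale g A) (q + x) =
  resolvent (op_scale (g / (2 * (1 - beta))) (op_add A B)) q.
Proof.
move=> Tx; rewrite resolvent_scale_shift; set a := Jq A x.
have JBa : Jq B (Rq A x) = a.
  have -> : Jq B (Rq A x) = a + (2 * beta)^-1 *: (Tq x - x).
    apply: (sqnormB_eq0 ip); rewrite /Tq /Rq -/a /sqnorm !ipE.
    by field; rewrite gt_eqF.
  by rewrite Tx subrr scaler0 addr0.
have [u [Au xu]] := Jq_spec hA x; have [v [Bv xv]] := Jq_spec hB (Rq A x).
rewrite JBa /op_perturb opprK in Bv xv; rewrite /op_perturb opprK -/a in Au xu.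
symmetry; apply: resolvent_eq.
  apply: monotone_scale; first by rewrite divr_gt0 // mulr_gt0 // subr_gt0.
  exact: monotone_add (proj1 hA) (proj1 hB).
exists (u + v); split; first by exists u, v.
have -> : u = g^-1 *: (x - a) by rewrite xu scalerA mulVf // scale1r.
have -> : v = g^-1 *: (Rq A x - a) by rewrite xv scalerA mulVf // scale1r.
by apply: (sqnormB_eq0 ip); rewrite /Rq -/a /sqnorm !ipE; field; rewrite g_neq0.
Qed.

Lemma Tq_fixed_point_exists :
  in_ran_Id_plus (op_scale (g / (2 * (1 - beta))) (op_add A B)) q -> exists x, Tq x = x.
Proof.
move=> [p [w [[w' [[a0 [b0 [Aa0 [Bb0 ->]]]] ->]] qp]]].
set a := p - q; have aq : a - - q = p by rewrite opprK subrK.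
have b0E : b0 = (2 * (1 - beta) / g) *: (- a) - a0.
  apply: (sqnormB_eq0 ip); rewrite /a qp /sqnorm !ipE.
  by field; rewrite one_minus_beta_neq0 g_neq0.
pose x := a + g *: a0.
have JAx : Jq A x = a.
  apply: resolvent_eq; first exact: Jq_monotone hA.
  exists a0; split; first by rewrite /op_perturb aq.
  by apply: (sqnormB_eq0 ip); rewrite /x /sqnorm !ipE; ring.
have JBx : Jq B (Rq A x) = a.
  apply: resolvent_eq; first exact: Jq_monotone hB.
  exists b0; split; first by rewrite /op_perturb aq.
  by rewrite /Rq JAx b0E /x; apply: (sqnormB_eq0 ip); rewrite /sqnorm !ipE; field.
exists x; rewrite /Tq JBx /Rq JAx.
by apply: (sqnormB_eq0 ip); rewrite /sqnorm !ipE; ring.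
Qed.

Lemma resolvent_strong_cvg (x : nat -> H) c : Tq c = c ->
  vanishes (fun n => sqnorm (x n - c) - sqnorm (Tq (x n) - c)) ->
  strong_cvg ip (fun n => resolvent (op_scale g A) (q + x n)) (resolvent (op_scale g A) (q + c)).
Proof.
move=> Tc gap; apply/strong_cvg_sqnormP.
apply: (vanishes_pscale contraction_gt0); apply: vanishes_le gap => n /=.
rewrite !resolvent_scale_shift opprD addrACA subrr addr0.
by have := Tq_contract (x n) c; rewrite Tc; lra.
Qed.

End DouglasRachford.

(** * Krasnosel'skiĭ–Mann iteration *)

Lemma nneseries_pinfty_unbounded {R : realType} (a : nat -> R) : (forall n, 0 <= a n) ->
  (\sum_(0 <= n <oo) ((a n)%:E) = +oo)%E -> forall M, exists N, M < \sum_(i < N) a i.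
Proof.
move=> a0 hs M; apply: contrapT => /forallNP hle.
suff : (\sum_(0 <= n <oo) ((a n)%:E) <= M%:E)%E by rewrite hs.
apply: lime_le; first by apply: is_cvg_nneseries => n _ _; rewrite lee_fin.
apply: nearW => N; rewrite sumEFin lee_fin big_mkord.
by case: (lerP (\sum_(i < N) a i) M) => // /hle.
Qed.

Section KrasnoselskiiMann.
Context {R : realType} {H : lmodType R} (ip : inner_product H).
Local Notation sqnorm := (sqnorm ip).
Variables (T : H -> H) (lam : nat -> R) (x : nat -> H).
Hypotheses (hT : nonexpansive ip T) (hlam : forall n, 0 <= lam n <= 1).
Hypothesis (hx : forall n, x n.+1 = (1 - lam n) *: x n + lam n *: T (x n)).

Let lam_ge0 n : 0 <= lam n. Proof. by case/andP: (hlam n). Qed.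
Let one_sub_lam_ge0 n : 0 <= 1 - lam n. Proof. by rewrite subr_ge0; case/andP: (hlam n). Qed.
Let lam_gap_ge0 n : 0 <= lam n * (1 - lam n).
Proof. exact: mulr_ge0 (lam_ge0 n) (one_sub_lam_ge0 n). Qed.

Lemma km_step n : x n.+1 - x n = lam n *: (T (x n) - x n).
Proof. by apply: (sqnormB_eq0 ip); rewrite hx /sqnorm !ipE; ring. Qed.

Lemma km_fejer {f} : T f = f -> forall n, sqnorm (x n.+1 - f) <=
  sqnorm (x n - f) - lam n * (1 - lam n) * sqnorm (T (x n) - x n).
Proof.
move=> Tf n.
have -> : x n.+1 - f = (1 - lam n) *: (x n - f) + lam n *: (T (x n) - T f).
  by apply: (sqnormB_eq0 ip); rewrite hx Tf /sqnorm !ipE; ring.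
rewrite sqnorm_convex_comb.
have -> : x n - f - (T (x n) - T f) = - (T (x n) - x n).
  by apply: (sqnormB_eq0 ip); rewrite Tf /sqnorm !ipE; ring.
rewrite sqnormN.
by have := ler_wpM2l (lam_ge0 n) (hT (x n) f); lra.
Qed.

Lemma km_fejer_mono {f} : T f = f -> forall k n, (k <= n)%N ->
  sqnorm (x n - f) <= sqnorm (x k - f).
Proof.
move=> Tf k n /subnK <-; elim: (n - k)%N => [|d IH] //=.
apply: le_trans IH; rewrite addSn; have := km_fejer Tf (d + k).
by have := mulr_ge0 (lam_gap_ge0 (d + k)) (sqnorm_ge0 ip (T (x (d + k)) - x (d + k))); lra.
Qed.

Lemma km_residual_nonincreasing k n : (k <= n)%N ->
  sqnorm (T (x n) - x n) <= sqnorm (T (x k) - x k).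
Proof.
move=> /subnK <-; elim: (n - k)%N => [|d IH] //=; apply: le_trans IH; rewrite addSn.
move: (d + k)%N => m; set s := Num.sqrt (sqnorm (T (x m) - x m)).
have s0 : 0 <= s by apply: sqrtr_ge0.
have sE : sqnorm (T (x m) - x m) = s ^+ 2 by rewrite sqr_sqrtr // sqnorm_ge0.
have -> : T (x m.+1) - x m.+1 = (T (x m.+1) - T (x m)) + (1 - lam m) *: (T (x m) - x m).
  by apply: (sqnormB_eq0 ip); rewrite {2}hx /sqnorm !ipE; ring.
have -> : sqnorm (T (x m) - x m) = (lam m * s + (1 - lam m) * s) ^+ 2.
  by rewrite sE; congr (_ ^+ 2); ring.
apply: sqnormD_le_sqr; rewrite ?mulr_ge0 //.
- by apply: le_trans (hT _ _) _; rewrite km_step sqnormZ sE exprMn.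
- by rewrite sqnormZ sE exprMn.
Qed.

Lemma km_weighted_residuals_le {f} : T f = f -> forall N,
  \sum_(i < N) lam i * (1 - lam i) * sqnorm (T (x i) - x i) <= sqnorm (x 0 - f).
Proof.
move=> Tf N; suff : sqnorm (x N - f) +
    \sum_(i < N) lam i * (1 - lam i) * sqnorm (T (x i) - x i) <= sqnorm (x 0 - f).
  by have := sqnorm_ge0 ip (x N - f); lra.
elim: N => [|N IH]; first by rewrite big_ord0 addr0.
by rewrite big_ord_recr /=; have := km_fejer Tf N; lra.
Qed.

Lemma km_residual_vanishes {f} : T f = f ->
  (forall M, exists N, M < \sum_(i < N) lam i * (1 - lam i)) ->
  vanishes (fun n => sqnorm (T (x n) - x n)).
Proof.
move=> Tf unbounded e e0; have [N hN] := unbounded (sqnorm (x 0 - f) / e).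
exists N => n /km_residual_nonincreasing /le_lt_trans; apply.
rewrite ltNge; apply/negP => ge_e; move: hN; rewrite ltr_pdivrMr // ltNge => /negP; apply.
apply: le_trans (km_weighted_residuals_le Tf N); rewrite mulr_suml.
apply: ler_sum => i _; apply: ler_wpM2l => //.
exact: le_trans ge_e (km_residual_nonincreasing _ _ (ltnW (ltn_ord i))).
Qed.

Lemma km_step_vanishes : vanishes (fun n => sqnorm (T (x n) - x n)) ->
  vanishes (fun n => sqnorm (x n.+1 - x n)).
Proof.
apply: vanishes_le => n; rewrite km_step sqnormZ ler_piMl ?sqnorm_ge0 //.
by rewrite expr_le1 //; case/andP: (hlam n).
Qed.

Lemma km_fejer_gap_vanishes {f} : T f = f -> vanishes (fun n => sqnorm (T (x n) - x n)) ->
  vanishes (fun n => sqnorm (x n - f) - sqnorm (T (x n) - f)).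
Proof.
move=> Tf hd e e0; set B0 := sqnorm (x 0 - f).
have B0_ge0 : 0 <= B0 by apply: sqnorm_ge0.
set t := e / (2 * (B0 + 1)).
have t0 : 0 < t by rewrite divr_gt0 // mulr_gt0 //; lra.
have tB0 : t * B0 < e / 2.
  have : t * (2 * (B0 + 1)) = e by rewrite /t mulfVK // gt_eqF // mulr_gt0 //; lra.
  by move: t0; clearbody t; lra.
have te : 0 < t * e / 2 by rewrite divr_gt0 // mulr_gt0.
have [N hN] := hd _ te.
exists N => n /hN dn.
have -> : T (x n) - f = (x n - f) + (T (x n) - x n) by rewrite [RHS]addrC addrA subrK.
rewrite (sqnormD ip (x n - f)); set d := T (x n) - x n.
have h1 : t * sqnorm (x n - f) <= t * B0.
  by rewrite ler_pM2l //; apply: km_fejer_mono Tf 0 n (leq0n n).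
have h2 : t^-1 * sqnorm d < e / 2.
  by rewrite -(ltr_pM2l t0) mulrA divff ?gt_eqF // mul1r mulrA.
have := normr_ip_le_amgm ip t (x n - f) d t0; have := ler_norm (- ip (x n - f) d).
by rewrite normrN; have := sqnorm_ge0 ip d; lra.
Qed.

End KrasnoselskiiMann.

(** * Asymptotic centers and weak convergence *)

Section AsymptoticCenter.
Context {R : realType} {H : lmodType R} (ip : inner_product H).
Local Notation sqnorm := (sqnorm ip).
Variables (T : H -> H) (x : nat -> H).
Hypotheses (hc : hilbert_complete ip) (hT : nonexpansive ip T).
Hypothesis fejer : forall f, T f = f ->
  forall k n, (k <= n)%N -> sqnorm (x n - f) <= sqnorm (x k - f).
Hypothesis residual_vanishes : vanishes (fun n => sqnorm (T (x n) - x n)).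

Definition infinitely_often (I : nat -> Prop) : Prop :=
  forall N, exists n, (N <= n)%N /\ I n.

Definition eventually_within (I : nat -> Prop) (y : H) (r : R) : Prop :=
  exists N, forall n, (N <= n)%N -> I n -> sqnorm (x n - y) <= r.

Lemma not_infinitely_often I : ~ infinitely_often I -> exists N, forall n, (N <= n)%N -> ~ I n.
Proof.
move=> h; apply: contrapT => h1; apply: h => N; apply: contrapT => h2.
by apply: h1; exists N => n hn In; apply: h2; exists n.
Qed.

Lemma eventually_within_midpoint {I y y' r r'} :
  eventually_within I y r -> eventually_within I y' r' ->
  eventually_within I (2^-1 *: (y + y')) ((r + r') / 2 - 4^-1 * sqnorm (y - y')).
Proof.
move=> [N1 h1] [N2 h2]; exists (maxn N1 N2) => n; rewrite geq_max => /andP[n1 n2] In.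
by have := h1 n n1 In; have := h2 n n2 In; rewrite sqnorm_midpoint; lra.
Qed.

Lemma eventually_within_closed I s l m : vanishes (fun i => sqnorm (s i - l)) ->
  (forall i, eventually_within I (s i) (m + i.+1%:R^-1)) -> 0 <= m ->
  forall e, 0 < e -> eventually_within I l (m + e).
Proof.
move=> sl hs m0 e e0; have e2 : 0 < e / 2 by rewrite divr_gt0.
have [d d0 hd] := sqnormD_le_small ip (m + e / 2) (e / 2) ltac:(lra) e2.
have [[N1 hN1] [N2 hN2]] := (sl _ d0, vanishes_inv_succ _ e2).
set i := maxn N1 N2; have [N hN] := hs i.
exists N => n /hN hn /hn xs.
have -> : x n - l = (x n - s i) + (s i - l) by rewrite addrA subrK.
have -> : m + e = m + e / 2 + e / 2 by lra.
apply: hd; last by apply: hN1; rewrite leq_maxl.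
by apply: le_trans xs _; rewrite lerD2l ltW // hN2 // leq_maxr.
Qed.

Section Center.
Variables (I : nat -> Prop) (c : H) (m : R).
Hypothesis m_ge0 : 0 <= m.
Hypotheses (c_within : forall e, 0 < e -> eventually_within I c (m + e))
  (m_min : forall y r, eventually_within I y r -> m <= r).

Lemma asymptotic_center_strict y r :
  eventually_within I y r -> m + 2^-1 * sqnorm (y - c) <= r.
Proof.
move=> hy; apply/ler_addgt0Pr => e /c_within hc'.
have := m_min _ _ (eventually_within_midpoint hy hc'); rewrite sqnormBC.
by have := sqnorm_ge0 ip (c - y); lra.
Qed.

Lemma asymptotic_center_fixed : T c = c.
Proof.
suff Tc_within (e : R) : 0 < e -> eventually_within I (T c) (m + e).
  apply: (sqnormB_le0 ip); apply/ler_addgt0Pr => e e0; rewrite add0r.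
  have e2 : 0 < e / 2 by rewrite divr_gt0.
  by have := asymptotic_center_strict _ _ (Tc_within _ e2); lra.
move=> e0; have e2 : 0 < e / 2 by rewrite divr_gt0.
have r0 : 0 <= m + e / 2 by move: m_ge0; lra.
have [d d0 hd] := sqnormD_le_small ip _ _ r0 e2.
have [[N1 hN1] [N2 hN2]] := (c_within _ e2, residual_vanishes _ d0).
exists (maxn N1 N2) => n; rewrite geq_max => /andP[n1 n2] In.
have -> : x n - T c = (T (x n) - T c) + (x n - T (x n)).
  by rewrite [RHS]addrC addrA subrK.
have -> : m + e = m + e / 2 + e / 2 by lra.
apply: hd; first exact: le_trans (hT _ _) (hN1 n n1 In).
by rewrite sqnormBC; apply: hN2.
Qed.

End Center.

Variables (f0 : H).
Hypothesis Tf0 : T f0 = f0.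

Lemma asymptotic_center_exists I : infinitely_often I -> exists c m, 0 <= m /\
  (forall e, 0 < e -> eventually_within I c (m + e)) /\
  (forall y r, eventually_within I y r -> m <= r).
Proof.
move=> I_inf; apply: (@uniformly_convex_epigraph_min R H (fun y y' => sqnorm (y - y'))
  (fun y y' => 2^-1 *: (y + y')) _ 4^-1).
- by rewrite invr_gt0.
- exact: complete_sqnorm hc.
- by exists f0, (sqnorm (x 0 - f0)), 0%N => n _ _; apply: fejer.
- move=> y r [N hN]; have [n [/hN hn /hn]] := I_inf N.
  by apply: le_trans; apply: sqnorm_ge0.
- by move=> y r r' [N hN] rr'; exists N => n /hN hn /hn /le_trans; apply.
- by move=> *; apply: eventually_within_midpoint.
- exact: eventually_within_closed.
Qed.

Lemma eventually_within_fixed_all {I f r} : T f = f -> infinitely_often I ->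
  eventually_within I f r -> eventually_within (fun _ => True) f r.
Proof.
move=> Tf I_inf [N hN]; have [k [/hN hk /hk xk]] := I_inf N.
by exists k => n kn _; apply: le_trans xk; apply: fejer.
Qed.

(* If [<x n - c, y>] were frequently [>= e], the asymptotic center [c'] of that
   subsequence would be a fixed point, hence (by Fejér monotonicity) at least as
   far from the sequence as [c]; but [c + t y] beats it on that subsequence. *)
Lemma asymptotic_center_unbiased c m :
  (forall e, 0 < e -> eventually_within (fun _ => True) c (m + e)) ->
  (forall y r, eventually_within (fun _ => True) y r -> m <= r) ->
  forall y e, 0 < e -> ~ infinitely_often (fun n => e <= ip (x n - c) y).
Proof.
move=> c_within m_min y e e0 I_inf.
have [c' [m' [m'0 [c'_within m'_min]]]] := asymptotic_center_exists _ I_inf.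
have Tc' := asymptotic_center_fixed _ _ _ m'0 c'_within m'_min.
have mm' : m <= m'.
  apply/ler_addgt0Pr => e' /c'_within /(eventually_within_fixed_all Tc' I_inf).
  exact: m_min.
have y0 := sqnorm_ge0 ip y; set t := e / (sqnorm y + 1).
have t0 : 0 < t by rewrite divr_gt0 // ltr_wpDl.
have ty : t * sqnorm y <= e.
  have : t * (sqnorm y + 1) = e by rewrite /t mulfVK // gt_eqF // ltr_wpDl.
  by move: t0; clearbody t; nra.
have te2 : 0 < t * e / 2 by rewrite divr_gt0 // mulr_gt0.
have [N hN] := c_within _ te2.
suff : eventually_within (fun n => e <= ip (x n - c) y) (c + t *: y)
    (m + t * e / 2 - 2 * t * e + t * (t * sqnorm y)).
  by move/m'_min; have := ler_wpM2l (ltW t0) ty; lra.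
exists N => n /hN /(_ I) xc In.
rewrite opprD addrA sqnormB sqnormZ ipZr.
by have := ler_wpM2l (ltW t0) In; lra.
Qed.

Lemma weak_cvg_fixed_point : exists c, T c = c /\ weak_cvg ip x c.
Proof.
have all_inf : infinitely_often (fun _ => True) by move=> N; exists N.
have [c [m [m0 [c_within m_min]]]] := asymptotic_center_exists _ all_inf.
exists c; split; first exact: asymptotic_center_fixed _ _ _ m0 c_within m_min.
apply: weak_cvgP => y e e0.
have unbiased z := not_infinitely_often _ (asymptotic_center_unbiased _ _ c_within m_min z _ e0).
have [[N1 h1] [N2 h2]] := (unbiased y, unbiased (- y)).
exists (maxn N1 N2) => n; rewrite geq_max => /andP[/h1/negP n1 /h2/negP n2].
rewrite -ltNge in n1; rewrite -ltNge ipNr in n2.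
by rewrite ltr_norml; apply/andP; split; lra.
Qed.

End AsymptoticCenter.

Theorem theorem3p5 (R : realType) (H : lmodType R) (ip : inner_product H)
  (Hcomplete : hilbert_complete ip)
  (A B : H -> set H)
  (hA : maximally_monotone ip A) (hB : maximally_monotone ip B)
  (gamma : R) (hgamma : 0 < gamma)
  (lam : nat -> R) (hlam : forall n, 0 <= lam n <= 1)
  (hsum : (\sum_(0 <= n <oo) ((lam n * (1 - lam n))%:E) = +oo)%E)
  (beta : R) (hbeta : 0 < beta < 1)
  (q : H)
  (hq : in_ran_Id_plus (op_scale (gamma / (2 * (1 - beta))) (op_add A B)) q)
  (x0 : H) (x : nat -> H)
  (hx0 : x 0%N = x0)
  (hx : forall n : nat,
     x n.+1 = (1 - lam n) *: x n + lam n *: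
       ((2 * beta) *: resolvent (op_scale gamma (op_perturb (- q) B))
            ((2 * beta) *: resolvent (op_scale gamma (op_perturb (- q) A)) (x n) - x n)
        - ((2 * beta) *: resolvent (op_scale gamma (op_perturb (- q) A)) (x n) - x n))) :
  exists xstar : H,
    xstar =
      (2 * beta) *: resolvent (op_scale gamma (op_perturb (- q) B))
          ((2 * beta) *: resolvent (op_scale gamma (op_perturb (- q) A)) xstar - xstar)
      - ((2 * beta) *: resolvent (op_scale gamma (op_perturb (- q) A)) xstar - xstar)
    /\ strong_cvg ip (fun n => x n.+1 - x n) 0
    /\ weak_cvg ip x xstar
    /\ resolvent (op_scale gamma A) (q + xstar)
       = resolvent (op_scale (gamma / (2 * (1 - beta))) (op_add A B)) q
    /\ strong_cvg ip (fun n => resolvent (op_scale gamma A) (q + x n))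
         (resolvent (op_scale (gamma / (2 * (1 - beta))) (op_add A B)) q).
Proof.
set T := Tq gamma beta q A B.
have hT : nonexpansive ip T := Tq_nonexpansive ip _ _ _ _ _ Hcomplete hgamma hbeta hA hB.
have hTx n : x n.+1 = (1 - lam n) *: x n + lam n *: T (x n) by exact: hx.
have [f Tf] := Tq_fixed_point_exists ip _ _ _ _ _ hgamma hbeta hA hB hq.
have lam_gap_ge0 n : 0 <= lam n * (1 - lam n).
  by case/andP: (hlam n) => l0 l1; rewrite mulr_ge0 ?subr_ge0.
have residual := km_residual_vanishes ip _ _ _ hT hlam hTx Tf
  (nneseries_pinfty_unbounded _ lam_gap_ge0 hsum).
have [c [Tc x_weak]] := weak_cvg_fixed_point ip _ _ Hcomplete hT
  (@km_fejer_mono _ _ ip _ _ _ hT hlam hTx) residual _ Tf.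
exists c; split; first by rewrite -[LHS]Tc.
split.
  apply/strong_cvg_sqnormP.
  by apply: vanishes_le (km_step_vanishes ip _ _ _ hlam hTx residual) => n; rewrite subr0.
have resolvent_c := Tq_fixed_resolvent ip _ _ _ _ _ Hcomplete hgamma hbeta hA hB _ Tc.
split=> //; split=> //; rewrite -resolvent_c.
exact: resolvent_strong_cvg ip _ _ _ _ _ Hcomplete hgamma hbeta hA hB _ _ Tc
  (km_fejer_gap_vanishes ip _ _ _ hT hlam hTx Tc residual).
Qed.
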